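(* For all record types $\rho_1,\rho_2\in\mathbb{T}_R$: $\rho_1+\rho_2=\rho_1\cap\rho_2$ if and only if $\rho_1+\rho_2\le\rho_1$.
   Context: $\mathbb{T}\ni\sigma ::= a\mid\omega\mid\sigma_1\to\sigma_2\mid\sigma_1\cap\sigma_2\mid\rho$ and record types $\mathbb{T}_R\ni\rho ::= \langle\rangle\mid\langle l:\sigma\rangle\mid\rho_1+\rho_2\mid\rho_1\cap\rho_2$. Subtyping $\le$ is the least preorder with: $\sigma\le\omega$; $\omega\le\omega\to\omega$; $\sigma\cap\tau\le\sigma$; $\sigma\cap\tau\le\tau$; $\sigma\le\tau_1,\sigma\le\tau_2\Rightarrow\sigma\le\tau_1\cap\tau_2$; $(\sigma\to\tau_1)\cap(\sigma\to\tau_2)\le\sigma\to\tau_1\cap\tau_2$; $\sigma_2\le\sigma_1,\tau_1\le\tau_2\Rightarrow\sigma_1\to\tau_1\le\sigma_2\to\tau_2$; $\langle l:\sigma\rangle\le\langle\rangle$; $\langle l:\sigma\rangle\cap\langle l:\tau\rangle\le\langle l:\sigma\cap\tau\rangle$; $\sigma\le\tau\Rightarrow\langle l:\sigma\rangle\le\langle l:\tau\rangle$; $\rho+\langle\rangle=\langle\rangle+\rho=\rho$; $(\rho_1+\rho_2)+\rho_3=\rho_1+(\rho_2+\rho_3)$; $(\rho_1\cap\rho_2)+\rho_3=(\rho_1+\rho_3)\cap(\rho_2+\rho_3)$; $\langle l:\sigma\rangle+(\langle l:\tau\rangle\cap\rho)=\langle l:\tau\rangle\cap\rho$; $\langle l:\sigma\rangle+(\langle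 l':\tau\rangle\cap\rho)=\langle l':\tau\rangle\cap(\langle l:\sigma\rangle+\rho)$ if $l\neq l'$; $\rho_1\le\rho_2\Rightarrow\rho_1+\rho\le\rho_2+\rho$; $\rho_1=\rho_2\Rightarrow\rho+\rho_1=\rho+\rho_2$. $=$ means $\le$ in both directions. *)

(* One syntax for all types; record types are the subset singled out by [is_rec].
   Atoms and labels are natural numbers. *)
Inductive ty : Type :=
| TAtom  : nat -> ty
| TOmega : ty
| TArr   : ty -> ty -> ty
| TInter : ty -> ty -> ty
| TEmpty : ty
| TField : nat -> ty -> ty
| TPlus  : ty -> ty -> ty.

Inductive is_rec : ty -> Prop :=
| rec_empty : is_rec TEmpty
| rec_field : forall l s, is_rec (TField l s)
| rec_plus  : forall r1 r2, is_rec r1 -> is_rec r2 -> is_rec (TPlus r1 r2)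
| rec_inter : forall r1 r2, is_rec r1 -> is_rec r2 -> is_rec (TInter r1 r2).

(* Subtyping: the least preorder closed under the listed rules.
   Each equation  A = B  contributes the two rules A <= B and B <= A. *)
Inductive sub : ty -> ty -> Prop :=
| sub_refl  : forall s, sub s s
| sub_trans : forall s t u, sub s t -> sub t u -> sub s u
| sub_omega : forall s, sub s TOmega
| sub_omega_arr : sub TOmega (TArr TOmega TOmega)
| sub_inter_l : forall s t, sub (TInter s t) s
| sub_inter_r : forall s t, sub (TInter s t) t
| sub_glb : forall s t1 t2, sub s t1 -> sub s t2 -> sub s (TInter t1 t2)
| sub_arr_inter : forall s t1 t2,
    sub (TInter (TArr s t1) (TArr s t2)) (TArr s (TInter t1 t2))
| sub_arr : forall s1 s2 t1 t2, sub s2 s1 -> sub t1 t2 ->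
    sub (TArr s1 t1) (TArr s2 t2)
| sub_field_empty : forall l s, sub (TField l s) TEmpty
| sub_field_inter : forall l s t,
    sub (TInter (TField l s) (TField l t)) (TField l (TInter s t))
| sub_field : forall l s t, sub s t -> sub (TField l s) (TField l t)
| sub_plus_empty_r1 : forall r, is_rec r -> sub (TPlus r TEmpty) r
| sub_plus_empty_r2 : forall r, is_rec r -> sub r (TPlus r TEmpty)
| sub_plus_empty_l1 : forall r, is_rec r -> sub (TPlus TEmpty r) r
| sub_plus_empty_l2 : forall r, is_rec r -> sub r (TPlus TEmpty r)
| sub_plus_assoc1 : forall r1 r2 r3, is_rec r1 -> is_rec r2 -> is_rec r3 ->
    sub (TPlus (TPlus r1 r2) r3) (TPlus r1 (TPlus r2 r3))
| sub_plus_assoc2 : forall r1 r2 r3, is_rec r1 -> is_rec r2 -> is_rec r3 ->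
    sub (TPlus r1 (TPlus r2 r3)) (TPlus (TPlus r1 r2) r3)
| sub_plus_inter1 : forall r1 r2 r3, is_rec r1 -> is_rec r2 -> is_rec r3 ->
    sub (TPlus (TInter r1 r2) r3) (TInter (TPlus r1 r3) (TPlus r2 r3))
| sub_plus_inter2 : forall r1 r2 r3, is_rec r1 -> is_rec r2 -> is_rec r3 ->
    sub (TInter (TPlus r1 r3) (TPlus r2 r3)) (TPlus (TInter r1 r2) r3)
| sub_plus_same1 : forall l s t r, is_rec r ->
    sub (TPlus (TField l s) (TInter (TField l t) r)) (TInter (TField l t) r)
| sub_plus_same2 : forall l s t r, is_rec r ->
    sub (TInter (TField l t) r) (TPlus (TField l s) (TInter (TField l t) r))
| sub_plus_diff1 : forall l l' s t r, l <> l' -> is_rec r ->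
    sub (TPlus (TField l s) (TInter (TField l' t) r))
        (TInter (TField l' t) (TPlus (TField l s) r))
| sub_plus_diff2 : forall l l' s t r, l <> l' -> is_rec r ->
    sub (TInter (TField l' t) (TPlus (TField l s) r))
        (TPlus (TField l s) (TInter (TField l' t) r))
| sub_plus_mono_l : forall r1 r2 r, is_rec r1 -> is_rec r2 -> is_rec r ->
    sub r1 r2 -> sub (TPlus r1 r) (TPlus r2 r)
(* r1 = r2  ==>  r + r1 = r + r2  (the reverse inclusion is the instance with r1, r2 swapped) *)
| sub_plus_cong_r : forall r r1 r2, is_rec r -> is_rec r1 -> is_rec r2 ->
    sub r1 r2 -> sub r2 r1 -> sub (TPlus r r1) (TPlus r r2).

Definition eqty (s t : ty) : Prop := sub s t /\ sub t s.

(* Every record type is equal to a list of fields <l1:s1> /\ (... /\ (<ln:sn> /\ <>)).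
   For such normal forms the rules for + show, by induction on the lists, that
   r1 + r2 <= r2 (the rules for + never drop a field of r2) and that
   r1 /\ r2 <= r1 + r2.  Hence if r1 + r2 <= r1, then r1 + r2 is a lower bound of
   r1 and r2, and so equals r1 /\ r2. *)

From Stdlib Require Import List PeanoNat.
Import ListNotations.

Fixpoint inter_fields (xs : list (nat * ty)) : ty :=
  match xs with
  | [] => TEmpty
  | (l, s) :: xs' => TInter (TField l s) (inter_fields xs')
  end.

Lemma is_rec_inter_fields xs : is_rec (inter_fields xs).
Proof.
  induction xs as [|[l s] xs IH]; simpl; constructor; auto; constructor.
Qed.

Local Hint Resolve is_rec_inter_fields rec_empty rec_field : core.

Lemma inter_fields_sub_empty xs : sub (inter_fields xs) TEmpty.
Proof.
  destruct xs as [|[l s] xs]; simpl.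
  - apply sub_refl.
  - eapply sub_trans; [apply sub_inter_l | apply sub_field_empty].
Qed.

Lemma sub_inter_mono a b c d : sub a c -> sub b d -> sub (TInter a b) (TInter c d).
Proof.
  intros Hac Hbd; apply sub_glb.
  - eapply sub_trans; [apply sub_inter_l | exact Hac].
  - eapply sub_trans; [apply sub_inter_r | exact Hbd].
Qed.

Lemma eqty_plus_cong a b c d : is_rec a -> is_rec b -> is_rec c -> is_rec d ->
  eqty a c -> eqty b d -> eqty (TPlus a b) (TPlus c d).
Proof.
  intros Ha Hb Hc Hd [Hac Hca] [Hbd Hdb]; split.
  - apply sub_trans with (TPlus c b).
    + apply sub_plus_mono_l; auto.
    + apply sub_plus_cong_r; auto.
  - apply sub_trans with (TPlus a d).
    + apply sub_plus_mono_l; auto.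
    + apply sub_plus_cong_r; auto.
Qed.

Lemma eqty_inter_fields_app xs ys :
  eqty (TInter (inter_fields xs) (inter_fields ys)) (inter_fields (xs ++ ys)).
Proof.
  induction xs as [|[l s] xs [IH1 IH2]]; simpl; split.
  - apply sub_inter_r.
  - apply sub_glb; [apply inter_fields_sub_empty | apply sub_refl].
  - apply sub_glb.
    + eapply sub_trans; apply sub_inter_l.
    + eapply sub_trans; [|exact IH1].
      apply sub_inter_mono; [apply sub_inter_r | apply sub_refl].
  - eapply sub_trans; [apply sub_inter_mono; [apply sub_refl | exact IH2] |].
    apply sub_glb.
    + apply sub_glb; [apply sub_inter_l |].
      eapply sub_trans; [apply sub_inter_r | apply sub_inter_l].
    + eapply sub_trans; [apply sub_inter_r | apply sub_inter_r].
Qed.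

Lemma field_plus_inter_fields_normal l s ys :
  exists zs, eqty (TPlus (TField l s) (inter_fields ys)) (inter_fields zs).
Proof.
  induction ys as [|[l' t] ys IH]; simpl.
  - exists [(l, s)]; simpl; split.
    + eapply sub_trans; [apply sub_plus_empty_r1; constructor |].
      apply sub_glb; [apply sub_refl | apply sub_field_empty].
    + eapply sub_trans; [apply sub_inter_l | apply sub_plus_empty_r2; constructor].
  - destruct (Nat.eq_dec l l') as [<-|Hne].
    + exists ((l, t) :: ys); simpl; split.
      * apply sub_plus_same1; auto.
      * apply sub_plus_same2; auto.
    + destruct IH as [zs [Hz1 Hz2]]. exists ((l', t) :: zs); simpl; split.
      * eapply sub_trans; [apply sub_plus_diff1; auto |].
        apply sub_inter_mono; [apply sub_refl | exact Hz1].
      * eapply sub_trans; [|apply sub_plus_diff2; auto].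
        apply sub_inter_mono; [apply sub_refl | exact Hz2].
Qed.

Lemma inter_fields_plus_normal xs ys :
  exists zs, eqty (TPlus (inter_fields xs) (inter_fields ys)) (inter_fields zs).
Proof.
  induction xs as [|[l s] xs IH]; simpl.
  - exists ys; split.
    + apply sub_plus_empty_l1; auto.
    + apply sub_plus_empty_l2; auto.
  - destruct (field_plus_inter_fields_normal l s ys) as [z1 [Hz1 Hz1']].
    destruct IH as [z2 [Hz2 Hz2']].
    destruct (eqty_inter_fields_app z1 z2) as [Happ Happ'].
    exists (z1 ++ z2); split.
    + eapply sub_trans; [apply sub_plus_inter1; auto |].
      eapply sub_trans; [|exact Happ]. apply sub_inter_mono; assumption.
    + eapply sub_trans; [|apply sub_plus_inter2; auto].
      eapply sub_trans; [exact Happ' |]. apply sub_inter_mono; assumption.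
Qed.

Lemma rec_normal_form r : is_rec r -> exists xs, eqty r (inter_fields xs).
Proof.
  induction 1 as [| l s | r1 r2 Hr1 [xs Hx] Hr2 [ys Hy]
                 | r1 r2 Hr1 [xs [Hx1 Hx2]] Hr2 [ys [Hy1 Hy2]]].
  - exists []; split; apply sub_refl.
  - exists [(l, s)]; simpl; split.
    + apply sub_glb; [apply sub_refl | apply sub_field_empty].
    + apply sub_inter_l.
  - destruct (inter_fields_plus_normal xs ys) as [zs [Hz1 Hz2]].
    destruct (eqty_plus_cong r1 r2 (inter_fields xs) (inter_fields ys)) as [Hp1 Hp2];
      auto.
    exists zs; split; eapply sub_trans; eauto.
  - destruct (eqty_inter_fields_app xs ys) as [Happ Happ'].
    exists (xs ++ ys); split; eapply sub_trans; eauto; apply sub_inter_mono; auto.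
Qed.

Lemma inter_fields_plus_sub_r xs ys :
  sub (TPlus (inter_fields xs) (inter_fields ys)) (inter_fields ys).
Proof.
  induction xs as [|[l s] xs IH]; simpl.
  - apply sub_plus_empty_l1; auto.
  - eapply sub_trans; [apply sub_plus_inter1; auto |].
    eapply sub_trans; [apply sub_inter_r | exact IH].
Qed.

Lemma field_inter_fields_sub_plus l s ys :
  sub (TInter (TField l s) (inter_fields ys)) (TPlus (TField l s) (inter_fields ys)).
Proof.
  induction ys as [|[l' t] ys IH]; simpl.
  - eapply sub_trans; [apply sub_inter_l | apply sub_plus_empty_r2; constructor].
  - destruct (Nat.eq_dec l l') as [<-|Hne].
    + eapply sub_trans; [apply sub_inter_r | apply sub_plus_same2; auto].
    + eapply sub_trans; [|apply sub_plus_diff2; auto].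
      apply sub_glb.
      * eapply sub_trans; [apply sub_inter_r | apply sub_inter_l].
      * eapply sub_trans; [|exact IH].
        apply sub_inter_mono; [apply sub_refl | apply sub_inter_r].
Qed.

Lemma inter_fields_inter_sub_plus xs ys :
  sub (TInter (inter_fields xs) (inter_fields ys))
      (TPlus (inter_fields xs) (inter_fields ys)).
Proof.
  induction xs as [|[l s] xs IH]; simpl.
  - eapply sub_trans; [apply sub_inter_r | apply sub_plus_empty_l2; auto].
  - eapply sub_trans; [|apply sub_plus_inter2; auto].
    apply sub_glb.
    + eapply sub_trans; [|apply field_inter_fields_sub_plus].
      apply sub_inter_mono; [apply sub_inter_l | apply sub_refl].
    + eapply sub_trans; [|exact IH].
      apply sub_inter_mono; [apply sub_inter_r | apply sub_refl].
Qed.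

Lemma rec_plus_sub_r r1 r2 : is_rec r1 -> is_rec r2 -> sub (TPlus r1 r2) r2.
Proof.
  intros Hr1 Hr2.
  destruct (rec_normal_form r1 Hr1) as [xs Hx].
  destruct (rec_normal_form r2 Hr2) as [ys Hy].
  destruct (eqty_plus_cong r1 r2 (inter_fields xs) (inter_fields ys)) as [Hp _]; auto.
  eapply sub_trans; [exact Hp |].
  eapply sub_trans; [apply inter_fields_plus_sub_r | apply Hy].
Qed.

Lemma rec_inter_sub_plus r1 r2 : is_rec r1 -> is_rec r2 -> sub (TInter r1 r2) (TPlus r1 r2).
Proof.
  intros Hr1 Hr2.
  destruct (rec_normal_form r1 Hr1) as [xs Hx].
  destruct (rec_normal_form r2 Hr2) as [ys Hy].
  destruct (eqty_plus_cong r1 r2 (inter_fields xs) (inter_fields ys)) as [_ Hp]; auto.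
  eapply sub_trans; [apply sub_inter_mono; [apply Hx | apply Hy] |].
  eapply sub_trans; [apply inter_fields_inter_sub_plus | exact Hp].
Qed.

Theorem lemma3p9 : forall r1 r2 : ty, is_rec r1 -> is_rec r2 ->
  (eqty (TPlus r1 r2) (TInter r1 r2) <-> sub (TPlus r1 r2) r1).
Proof.
  intros r1 r2 Hr1 Hr2; split.
  - intros [Hsub _]. eapply sub_trans; [exact Hsub | apply sub_inter_l].
  - intros Hsub; split.
    + apply sub_glb; [exact Hsub | apply rec_plus_sub_r; assumption].
    + apply rec_inter_sub_plus; assumption.
Qed.
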